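(* Let $Q$ be an $[[n,k,d]]$ stabilizer code with codespace projector $P_Q$ whose Shor–Laflamme enumerators satisfy $A_{2i+1}=0$ for all $i$. Then $$B_n\le\frac{1}{L(n)}\,\frac{3^n}{2^{n-k}}.$$
   Context: For an $[[n,k,d]]$ stabilizer code with projector $P_Q$ onto its $2^k$-dimensional codespace, the Shor–Laflamme enumerators are $A_i=\frac{1}{2^{2k}}\sum_{\sigma:w(\sigma)=i}\mathrm{Tr}[\sigma P_Q]\mathrm{Tr}[\sigma^\dagger P_Q]$ and $B_i=\frac{1}{2^k}\sum_{\sigma:w(\sigma)=i}\mathrm{Tr}[\sigma P_Q\sigma^\dagger P_Q]$, where $\sigma$ ranges over the $n$-qubit Pauli operators $\{\mathbb{1},X,Y,Z\}^{\otimes n}$ and $w(\sigma)$ is the number of non-identity tensor factors. The quaternary Krawtchouk polynomials are $K_w(l)=\sum_{j=0}^{w}\binom{l}{j}\binom{n-l}{w-j}(-1)^j3^{w-j}$. $L(n)$ is the optimal value of the linear program in variables $y_0,\dots,y_{\lfloor n/2\rfloor}\in\mathbb{R}$: minimize $3^ny_0$ subject to $y_j\ge0$ for all $j$, $\sum_{j=0}^{\lfloor n/2\rfloor}K_i(2j)y_j\ge0$ for $i=0,\dots,n$, and $\sum_{j=0}^{\lfloor n/2\rfloor}3^{n-2j}y_j=1$. *)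

From HB Require Import structures.
From mathcomp Require Import all_boot all_order all_algebra.
From mathcomp Require Import complex.
From mathcomp Require Import classical_sets reals.
Set Implicit Arguments. Unset Strict Implicit. Unset Printing Implicit Defensive.
Import Order.TTheory GRing.Theory Num.Theory.
Local Open Scope ring_scope.
Local Open Scope complex_scope.

Section Defs.
Variable R : realType.
Local Notation C := R[i].

(* Single-qubit Pauli labels: 0 = identity, 1 = X, 2 = Y, 3 = Z.
   Entry (a,b) of the 2x2 matrix, with a,b the row/column basis bits. *)
Definition pauli1 (p : 'I_4) (a b : bool) : C :=
  match val p with
  | 0 => if a == b then 1 else 0
  | 1 => if a == b then 0 else 1
  | 2 => if a == b then 0 else if a then 'i else - 'i
  | _ => if a == b then (if a then -1 else 1) else 0
  end.

Definition qbit (r i : nat) : bool := odd (r %/ 2 ^ i).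

Definition pstring (n : nat) := {ffun 'I_n -> 'I_4}.

(* the 2^n x 2^n matrix of the tensor product sigma_0 (x) ... (x) sigma_{n-1} *)
Definition pmat (n : nat) (s : pstring n) : 'M[C]_(2 ^ n) :=
  \matrix_(r, c) \prod_(i < n) pauli1 (s i) (qbit r i) (qbit c i).

Definition pweight (n : nat) (s : pstring n) : nat := #|[set i | s i != ord0]|.

Definition pid (n : nat) : pstring n := [ffun => ord0].

Definition adjmx (m : nat) (M : 'M[C]_m) : 'M[C]_m := map_mx conjc (trmx M).

Definition smat (n : nat) (e : bool * pstring n) : 'M[C]_(2 ^ n) :=
  (-1) ^+ e.1 *: pmat e.2.

(* S is the stabilizer group of an [[n,k]] stabilizer code: an abelian subgroup
   of the n-qubit Pauli group not containing -1, with n-k independent generators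
   (equivalently 2^(n-k) elements). *)
Definition stab_closed (n : nat) (S : {set bool * pstring n}) : Prop :=
  forall a b, a \in S -> b \in S ->
    exists c, c \in S /\ smat c = smat a *m smat b.

Definition stab_abelian (n : nat) (S : {set bool * pstring n}) : Prop :=
  forall a b, a \in S -> b \in S -> smat a *m smat b = smat b *m smat a.

Definition is_stabilizer_group (n k : nat) (S : {set bool * pstring n}) : Prop :=
  [/\ (k <= n)%N, #|S| = (2 ^ (n - k))%N,
      (false, pid n) \in S /\ (true, pid n) \notin S,
      stab_closed S & stab_abelian S].

Definition codespace_proj (n : nat) (S : {set bool * pstring n}) : 'M[C]_(2 ^ n) :=
  (#|S|%:R)^-1 *: \sum_(e in S) smat e.

Definition SL_A (n k : nat) (P : 'M[C]_(2 ^ n)) (i : nat) : C :=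
  ((2 ^ (2 * k))%:R)^-1 *
  \sum_(s : pstring n | pweight s == i)
     \tr (pmat s *m P) * \tr (adjmx (pmat s) *m P).

Definition SL_B (n k : nat) (P : 'M[C]_(2 ^ n)) (i : nat) : C :=
  ((2 ^ k)%:R)^-1 *
  \sum_(s : pstring n | pweight s == i)
     \tr (pmat s *m P *m adjmx (pmat s) *m P).

Definition kraw (n w l : nat) : R :=
  \sum_(j < w.+1) (-1) ^+ j * ('C(l, j) * 'C(n - l, w - j) * 3 ^ (w - j))%:R.

Definition LP_feasible (n : nat) (y : 'I_(n./2).+1 -> R) : Prop :=
  [/\ (forall j, 0 <= y j),
      (forall i : 'I_n.+1, 0 <= \sum_(j < (n./2).+1) kraw n i (2 * j) * y j)
    & \sum_(j < (n./2).+1) (3 ^ (n - 2 * j))%:R * y j = 1].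

Definition LPval (n : nat) : R :=
  inf [set v | exists y, @LP_feasible n y /\ v = (3 ^ n)%:R * y ord0].

End Defs.

From Pilot Require Import Defs.
From HB Require Import structures.
From mathcomp Require Import all_boot all_order all_algebra.
From mathcomp Require Import complex.
From mathcomp Require Import classical_sets reals.
From mathcomp Require Import ring lra zify.
Set Implicit Arguments. Unset Strict Implicit. Unset Printing Implicit Defensive.
Import Order.TTheory GRing.Theory Num.Theory.
Local Open Scope ring_scope.
Local Open Scope complex_scope.

(* By trace orthogonality of Pauli strings, A_l is the
   number of elements of S of weight l, and 2^(n-k) B_w = X_w, the sum over Pauli strings s
   of weight w and g in S of the sign chi(s, g) = +-1 recording whether s and g commute.
   Since chi(s, -) is a character of S, every X_w is nonnegative, and the generating
   function of chi gives the MacWilliams identity X_w = sum_l K_w(l) A_l. When S has no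
   element of odd weight, y_j = A_(2j) / X_n is therefore feasible for the linear program,
   with objective 3^n / X_n; hence L(n) <= 3^n / X_n = 3^n / (2^(n-k) B_n). *)

Lemma qbitDexp n r i : (i < n)%N -> qbit (r + 2 ^ n)%N i = qbit r i.
Proof.
move=> lt_in; rewrite /qbit -(subnK (ltnW lt_in)) expnD divnDr ?dvdn_mull //.
by rewrite mulnK ?expn_gt0 // oddD oddX subn_eq0 leqNgt lt_in addbF.
Qed.

Lemma qbit_small n r : (r < 2 ^ n)%N -> qbit r n = false.
Proof. by move=> lt_r; rewrite /qbit divn_small. Qed.

Lemma qbitDexp_small n r : (r < 2 ^ n)%N -> qbit (r + 2 ^ n)%N n = true.
Proof. by move=> lt_r; rewrite /qbit divnDr // divnn expn_gt0 /= divn_small. Qed.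

Lemma qbit_inj n r c : (r < 2 ^ n)%N -> (c < 2 ^ n)%N ->
  (forall i, (i < n)%N -> qbit r i = qbit c i) -> r = c.
Proof.
elim: n r c => [|n IHn] r c; first by rewrite expn0 !ltnS !leqn0 => /eqP-> /eqP->.
move=> lt_r lt_c eq_rc.
have eq_odd : odd r = odd c by have := eq_rc 0%N isT; rewrite /qbit !divn1.
have eq_half : (r %/ 2 = c %/ 2)%N.
  apply: IHn; rewrite ?ltn_divLR // -?expnSr // => i lt_in.
  by have := eq_rc i.+1 lt_in; rewrite /qbit expnS !divnMA.
by rewrite -[r]odd_double_half -[c]odd_double_half eq_odd -!divn2 eq_half.
Qed.

Lemma big_ord_exp2S (T : nmodType) n (G : nat -> T) :
  \sum_(r < 2 ^ n.+1) G r = \sum_(r < 2 ^ n) G r + \sum_(r < 2 ^ n) G (r + 2 ^ n)%N.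
Proof.
rewrite -!(big_mkord xpredT) expnS mul2n -addnn (big_cat_nat _ (leq_addr _ _)) //=.
congr (_ + _); rewrite -{1}(add0n (2 ^ n)%N) big_addn addnK.
by rewrite big_mkord.
Qed.

Lemma sum_prod_qbit (T : comNzRingType) n (F : 'I_n -> bool -> T) :
  \sum_(r < 2 ^ n) \prod_(i < n) F i (qbit r i) = \prod_(i < n) (F i false + F i true).
Proof.
elim: n F => [|n IHn] F; first by rewrite big_ord1 !big_ord0.
rewrite (big_ord_exp2S n (fun r => \prod_(i < n.+1) F i (qbit r i))) [RHS]big_ord_recr /=.
under eq_bigr => r _ do rewrite big_ord_recr /= qbit_small //.
under [X in _ + X]eq_bigr => r _ do rewrite big_ord_recr /= qbitDexp_small //.
under [X in _ + X]eq_bigr => r _ do under eq_bigr => i _ do rewrite qbitDexp //.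
by rewrite -!big_distrl /= (IHn (fun i => F (widen_ord (leqnSn n) i))) mulrDr.
Qed.

Lemma prod_if0 (T : comNzRingType) n (P : 'I_n -> bool) (x : T) :
  \prod_(i < n) (if P i then x else 0) = if [forall i, P i] then x ^+ n else 0.
Proof.
have [/forallP allP | /forallPn[i /negbTE nPi]] := boolP [forall i, P i].
  by under eq_bigr => i _ do rewrite allP; rewrite prodr_const card_ord.
by rewrite (bigD1 i) //= nPi mul0r.
Qed.

Lemma double_ord_half_le n (j : 'I_(n./2).+1) : (2 * j <= n)%N.
Proof. by have := ltn_ord j; lia. Qed.

Lemma eq_pstringE n (s t : pstring n) : [forall i, s i == t i] = (s == t).
Proof. by apply/forallP/eqP => [eq_st|-> //]; apply/ffunP => i; apply/eqP. Qed.

Lemma coef_lin_exp (T : comNzRingType) (c : T) m j :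
  ((c *: 'X + 1) ^+ m)`_j = c ^+ j *+ 'C(m, j).
Proof.
rewrite exprD1n coef_sum.
under eq_bigr => i _ do rewrite exprZn coefMn coefZ coefXn.
have [lt_jm|le_mj] := ltnP j m.+1.
  rewrite (bigD1 (Ordinal lt_jm)) //= eqxx mulr1 big1 ?addr0 // => i /negbTE.
  by rewrite -val_eqE /= eq_sym => ->; rewrite mulr0 mul0rn.
rewrite bin_small // mulr0n big1 // => i _.
by rewrite eq_sym (ltn_eqF (leq_trans (ltn_ord i) le_mj)) mulr0 mul0rn.
Qed.

Lemma size_lin_exp (T : comNzRingType) (c : T) m :
  (size ((c *: 'X + 1) ^+ m) <= m.+1)%N.
Proof. by apply/leq_sizeP => j lt_mj; rewrite coef_lin_exp bin_small // mulr0n. Qed.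

Section WeightEnumerators.
Variable R : realType.
Local Notation C := R[i].
Local Notation pauli1 := (@pauli1 R).
Local Notation pmat := (pmat R).
Local Notation smat := (smat R).

(** * Pauli strings *)

Definition tensmx n (G : 'I_n -> bool -> bool -> C) : 'M[C]_(2 ^ n) :=
  \matrix_(r, c) \prod_(i < n) G i (qbit r i) (qbit c i).

Lemma pmatE n (s : pstring n) : pmat s = tensmx (fun i => pauli1 (s i)).
Proof. by []. Qed.

Lemma tensmxM n (G H : 'I_n -> bool -> bool -> C) :
  tensmx G *m tensmx H = tensmx (fun i a c => \sum_(b : bool) G i a b * H i b c).
Proof.
apply/matrixP => r c; rewrite !mxE.
under eq_bigr => m _ do rewrite !mxE -big_split /=.
rewrite (sum_prod_qbit (fun i b => G i (qbit r i) b * H i b (qbit c i))).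
by apply: eq_bigr => i _; rewrite big_bool addrC.
Qed.

Lemma mxtrace_tensmx n (G : 'I_n -> bool -> bool -> C) :
  \tr (tensmx G) = \prod_(i < n) \sum_(a : bool) G i a a.
Proof.
rewrite /mxtrace; under eq_bigr => m _ do rewrite mxE.
rewrite (sum_prod_qbit (fun i b => G i b b)).
by apply: eq_bigr => i _; rewrite big_bool addrC.
Qed.

Lemma tensmx1 n : tensmx (fun (i : 'I_n) (a b : bool) => (a == b)%:R) = 1%:M.
Proof.
apply/matrixP => r c; rewrite !mxE; have [->|neq_rc] := eqVneq r c.
  by rewrite big1 // => i _; rewrite eqxx.
have [i neq_i] : exists i : 'I_n, qbit r i != qbit c i.
  apply/existsP; rewrite -negb_forall; apply: contra neq_rc => /forallP eq_rc.
  apply/eqP/val_inj/(@qbit_inj n); rewrite ?ltn_ord // => i lt_in.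
  exact/eqP/(eq_rc (Ordinal lt_in)).
by rewrite (bigD1 i) //= (negbTE neq_i) mul0r.
Qed.

Lemma adjmx_tensmx n (G : 'I_n -> bool -> bool -> C) :
  adjmx (tensmx G) = tensmx (fun i a b => (G i b a)^*).
Proof. by apply/matrixP => r c; rewrite !mxE rmorph_prod. Qed.

Definition comm_sign1 (p q : 'I_4) : R :=
  if [|| val p == 0%N, val q == 0%N | val p == val q] then 1 else -1.

Definition comm_sign n (s t : pstring n) : R := \prod_(i < n) comm_sign1 (s i) (t i).

(* Splitting the entries into real and imaginary parts turns each single-qubit
   identity below into finitely many ring identities over R. *)
Definition pauli_re p a b := complex.Re (pauli1 p a b).
Definition pauli_im p a b := complex.Im (pauli1 p a b).

Lemma pauli1E p a b : pauli1 p a b = pauli_re p a b +i* pauli_im p a b.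
Proof. by rewrite /pauli_re /pauli_im; case: (pauli1 p a b). Qed.

Local Ltac pauli_entries :=
  rewrite ?big_bool /= !pauli1E -?complexr0; simpc; congr (_ +i* _);
  repeat match goal with
  | p : 'I_4 |- _ => case: p => -[|[|[|[|//]]]] ?
  | a : bool |- _ => case: a
  end;
  rewrite /pauli_re /pauli_im /pauli1 ?/comm_sign1 /=; ring.

Lemma pauli1_adj p a b : (pauli1 p b a)^* = pauli1 p a b.
Proof. by pauli_entries. Qed.

Lemma pauli1_sqr p a c :
  \sum_(b : bool) pauli1 p a b * pauli1 p b c = ((a == c)%:R : R)%:C.
Proof. by pauli_entries. Qed.

Lemma pauli1_trM p q :
  \sum_(a : bool) \sum_(b : bool) pauli1 p a b * pauli1 q b a
  = (if p == q then 2 else 0 : R)%:C.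
Proof. by pauli_entries. Qed.

Lemma pauli1_conj p q a c :
  \sum_(b : bool) (\sum_(b' : bool) pauli1 p a b' * pauli1 q b' b) * pauli1 p b c
  = (comm_sign1 p q)%:C * pauli1 q a c.
Proof. by pauli_entries. Qed.

Lemma adjmx_pmat n (s : pstring n) : adjmx (pmat s) = pmat s.
Proof.
rewrite pmatE adjmx_tensmx; apply/matrixP => r c; rewrite !mxE.
by apply: eq_bigr => i _; rewrite pauli1_adj.
Qed.

Lemma pmat_sqr n (s : pstring n) : pmat s *m pmat s = 1%:M.
Proof.
rewrite pmatE tensmxM -(tensmx1 n); apply/matrixP => r c; rewrite !mxE.
by apply: eq_bigr => i _; rewrite pauli1_sqr rmorph_nat.
Qed.

Lemma pmat_pid n : pmat (pid n) = 1%:M.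
Proof.
rewrite pmatE -(tensmx1 n); apply/matrixP => r c; rewrite !mxE.
by apply: eq_bigr => i _; rewrite ffunE /pauli1 /=; case: (_ == _).
Qed.

Lemma mxtrace_pmatM n (s t : pstring n) :
  \tr (pmat s *m pmat t) = (if s == t then 2 ^+ n else 0 : R)%:C.
Proof.
rewrite !pmatE tensmxM mxtrace_tensmx; under eq_bigr => i _ do rewrite pauli1_trM.
by rewrite -rmorph_prod prod_if0 eq_pstringE.
Qed.

Lemma pmat_conj n (s t : pstring n) :
  pmat s *m pmat t *m pmat s = (comm_sign s t)%:C *: pmat t.
Proof.
rewrite !pmatE !tensmxM; apply/matrixP => r c; rewrite !mxE rmorph_prod -big_split /=.
by apply: eq_bigr => i _; rewrite pauli1_conj.
Qed.

Lemma comm_sign_sqr n (s t : pstring n) : comm_sign s t ^+ 2 = 1.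
Proof.
rewrite /comm_sign -prodrXl big1 // => i _.
by rewrite /comm_sign1; case: ifP; rewrite ?sqrrN expr1n.
Qed.

Lemma comm_signN1 n (s t : pstring n) : comm_sign s t != 1 -> comm_sign s t = -1.
Proof.
by move=> neq1; apply/eqP; move/eqP: (comm_sign_sqr s t); rewrite sqrf_eq1 (negbTE neq1).
Qed.

Lemma pweightE n (s : pstring n) : pweight s = (\sum_(i < n) (s i != ord0))%N.
Proof.
rewrite /pweight -sum1_card big_mkcond /=; apply: eq_bigr => i _.
by rewrite inE; case: (s i != ord0).
Qed.

Lemma pweight_le n (s : pstring n) : (pweight s <= n)%N.
Proof. by rewrite /pweight -[X in (_ <= X)%N]card_ord max_card. Qed.

Lemma pweight_eq0 n (s : pstring n) : (pweight s == 0%N) = (s == pid n).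
Proof.
rewrite /pweight cards_eq0; apply/eqP/eqP => [s0|->].
  apply/ffunP => i; rewrite ffunE; apply/eqP/negPn/negP => nz_si.
  by move/setP/(_ i): s0; rewrite !inE nz_si.
by apply/setP => i; rewrite !inE ffunE eqxx.
Qed.

(** * Krawtchouk polynomials and the MacWilliams identity *)

Definition kraw_poly n l : {poly R} := (1 - 'X) ^+ l * (1 + 'X *+ 3) ^+ (n - l).

Lemma kraw_polyE n l :
  kraw_poly n l = ((-1) *: 'X + 1) ^+ l * (3%:R *: 'X + 1) ^+ (n - l).
Proof. by rewrite /kraw_poly scaleN1r scaler_nat ![_ + 1]addrC. Qed.

Lemma coef_kraw_poly n w l : (kraw_poly n l)`_w = kraw R n w l.
Proof.
rewrite kraw_polyE coefM /kraw; apply: eq_bigr => j _; rewrite !coef_lin_exp !natrM natrX.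
by rewrite -(mulr_natr ((-1) ^+ j)) -(mulr_natr (3 ^+ (w - j))) !mulrA [LHS]mulrAC.
Qed.

Lemma size_kraw_poly n l : (l <= n)%N -> (size (kraw_poly n l) <= n.+1)%N.
Proof.
move=> le_ln; rewrite kraw_polyE (leq_trans (size_polyMleq _ _)) //.
rewrite -subn1 leq_subLR add1n.
apply: leq_trans (leq_add (size_lin_exp _ _) (size_lin_exp _ _)) _.
by rewrite addSn addnS subnKC.
Qed.

Lemma kraw_top n l : (l <= n)%N -> kraw R n n l = (-1) ^+ l * (3 ^ (n - l))%:R.
Proof.
move=> le_ln; rewrite /kraw (bigD1 (Ordinal (le_ln : (l < n.+1)%N))) //= big1 ?addr0.
  by rewrite !binn !mul1n.
move=> j /negbTE neq_jl; have [lt_jl|lt_lj|eq_jl] := ltngtP j l.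
- have le_jn : (j <= n)%N by rewrite -ltnS.
  by rewrite (@bin_small (n - l) (n - j)) ?muln0 ?mul0n ?mulr0 //; lia.
- by rewrite bin_small // mul0n mulr0.
- by move: neq_jl; rewrite -val_eqE /= eq_jl eqxx.
Qed.

Lemma sum_kraw n l : (l <= n)%N ->
  \sum_(w < n.+1) kraw R n w l = if l == 0%N then 4 ^+ n else 0.
Proof.
move=> le_ln; under eq_bigr => w _ do rewrite -coef_kraw_poly -[_`_w]mulr1 -(expr1n _ w).
rewrite -horner_coef_wide ?size_kraw_poly // hornerM !horner_exp hornerD hornerN.
rewrite hornerD hornerMn hornerX -polyC1 hornerC subrr expr0n.
case: eqP => [->|_]; rewrite ?mul0r // mul1r subn0; congr (_ ^+ _); ring.
Qed.

Lemma sum_comm_sign1_X (q : 'I_4) :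
  \sum_(p < 4) (comm_sign1 p q)%:P * 'X^(p != ord0) =
  (if q == ord0 then 1 + 'X *+ 3 else 1 - 'X : {poly R}).
Proof.
rewrite !big_ord_recl big_ord0 /comm_sign1 /=.
by case: q => -[|[|[|[|//]]]] ?; rewrite /= ?polyCN ?polyC1 ?expr0 ?expr1 /bump /=; ring.
Qed.

Lemma comm_sign_genfun n (t : pstring n) :
  \sum_(s : pstring n) (comm_sign s t)%:P * 'X^(pweight s) =
  kraw_poly n (pweight t).
Proof.
under eq_bigr => s _ do rewrite pweightE -prodrXr rmorph_prod -big_split /=.
rewrite -(bigA_distr_bigA (fun i p => (comm_sign1 p (t i))%:P * 'X^(p != ord0))) /=.
under eq_bigr => i _ do rewrite sum_comm_sign1_X.
rewrite /kraw_poly (bigID (fun i => t i == ord0)) /=.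
under eq_bigr => i ti0 do rewrite ti0.
under [X in _ * X]eq_bigr => i nti0 do rewrite (negbTE nti0).
rewrite !prodr_const mulrC; congr (_ ^+ _ * _ ^+ _); first by rewrite /pweight cardsE.
have := cardC [pred i | t i != ord0]; rewrite card_ord => card_split.
rewrite /pweight cardsE -[X in (X - _)%N]card_split addKn.
by apply: eq_card => i; rewrite !inE negbK.
Qed.

Lemma sum_comm_sign_weight n (t : pstring n) w :
  \sum_(s : pstring n | pweight s == w) comm_sign s t = kraw R n w (pweight t).
Proof.
rewrite -coef_kraw_poly -comm_sign_genfun coef_sum big_mkcond /=; apply: eq_bigr => s _.
by rewrite coefCM coefXn eq_sym; case: eqP; rewrite ?mulr1 ?mulr0.
Qed.

(** * The linear program *)

Lemma kraw_top_even n (j : 'I_(n./2).+1) : kraw R n n (2 * j) = (3 ^ (n - 2 * j))%:R.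
Proof. by rewrite kraw_top ?double_ord_half_le // exprM sqrrN expr1n expr1n mul1r. Qed.

(* Summing all constraints, only y_0 survives (sum_kraw), while the constraint
   i = n is the normalisation. *)
Lemma LP_feasible_y0 n (y : 'I_(n./2).+1 -> R) : LP_feasible y -> 1 <= 4 ^+ n * y ord0.
Proof.
case=> y_ge0 cons_ge0 y_norm.
have sum_cons : \sum_(i < n.+1) \sum_(j < (n./2).+1) kraw R n i (2 * j) * y j
                = 4 ^+ n * y ord0.
  rewrite exchange_big /=.
  under eq_bigr => j _ do rewrite -big_distrl /= sum_kraw ?double_ord_half_le //.
  by rewrite big_ord_recl /= big1 ?addr0 // => j _; rewrite mul0r.
have cons_n : \sum_(j < (n./2).+1) kraw R n n (2 * j) * y j = 1.
  by rewrite -y_norm; apply: eq_bigr => j _; rewrite kraw_top_even.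
rewrite -sum_cons -cons_n [leRHS](bigD1 ord_max) //= lerDl.
by apply: sumr_ge0 => i _; apply: cons_ge0.
Qed.

Lemma LPval_le n (y : 'I_(n./2).+1 -> R) :
  LP_feasible y -> LPval R n <= (3 ^ n)%:R * y ord0.
Proof.
move=> feas_y; apply: ge_inf; last by exists y.
by exists 0 => _ [z [[z_ge0 _ _] ->]]; rewrite mulr_ge0.
Qed.

Lemma LPval_gt0 n (y : 'I_(n./2).+1 -> R) : LP_feasible y -> 0 < LPval R n.
Proof.
move=> feas_y; apply: (@lt_le_trans _ _ ((3 ^ n)%:R / 4 ^+ n)).
  by rewrite divr_gt0 // ?ltr0n ?expn_gt0 // exprn_gt0.
apply: lb_le_inf; first by exists ((3 ^ n)%:R * y ord0); exists y.
move=> _ [z [feas_z ->]]; rewrite ler_pdivrMr ?exprn_gt0 // -mulrA ler_peMr //.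
by rewrite mulrC; apply: LP_feasible_y0.
Qed.

(* z / N is feasible, where N = \sum_j 3^(n - 2j) z_j is the normalisation. *)
Lemma LPval_scaled_bound n (z : 'I_(n./2).+1 -> R) :
  (forall j, 0 <= z j) ->
  (forall i : 'I_n.+1, 0 <= \sum_(j < (n./2).+1) kraw R n i (2 * j) * z j) ->
  0 < z ord0 ->
  \sum_(j < (n./2).+1) (3 ^ (n - 2 * j))%:R * z j <= (LPval R n)^-1 * ((3 ^ n)%:R * z ord0).
Proof.
move=> z_ge0 cons_ge0 z0_gt0; set N := \sum_(j < _) _ * z j.
have N_gt0 : 0 < N.
  rewrite /N (bigD1 ord0) //= ltr_wpDr ?sumr_ge0 // => [j _|].
    by rewrite mulr_ge0.
  by rewrite mulr_gt0 // ltr0n expn_gt0.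
have feas_y : LP_feasible (fun j => z j / N).
  split=> [j|i|]; first by rewrite divr_ge0 // ltW.
    by under eq_bigr do rewrite mulrA; rewrite -mulr_suml divr_ge0 // ltW.
  by under eq_bigr do rewrite mulrA; rewrite -mulr_suml divff ?gt_eqF.
have := LPval_le feas_y; rewrite mulrA ler_pdivlMr // => LN_le.
by rewrite ler_pdivlMl // (LPval_gt0 feas_y).
Qed.

(** * Stabilizer codes *)

Lemma mxtrace_pmat_smat n (t : pstring n) e :
  \tr (pmat t *m smat e) = ((-1) ^+ e.1 * (if t == e.2 then 2 ^+ n else 0) : R)%:C.
Proof. by rewrite /smat -scalemxAr mxtraceZ mxtrace_pmatM rmorphM rmorph_sign. Qed.

Lemma mxtrace_smatM n (e f : bool * pstring n) : \tr (smat e *m smat f) =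
  ((-1) ^+ e.1 * ((-1) ^+ f.1 * (if e.2 == f.2 then 2 ^+ n else 0)) : R)%:C.
Proof.
by rewrite {1}/smat -scalemxAl mxtraceZ mxtrace_pmat_smat [RHS]rmorphM rmorph_sign.
Qed.

Lemma smat_sqr n (e : bool * pstring n) : smat e *m smat e = 1%:M.
Proof.
by rewrite /smat -scalemxAl -scalemxAr pmat_sqr scalerA -expr2 sqrr_sign scale1r.
Qed.

Lemma smat_neq0 n (e : bool * pstring n) : smat e != 0.
Proof.
apply/eqP => e0; have := congr1 mxtrace (smat_sqr e).
by rewrite e0 mul0mx mxtrace0 mxtrace1 => /eqP; rewrite eq_sym pnatr_eq0 expn_eq0.
Qed.

Lemma smat_inj n : injective (@Defs.smat R n).
Proof.
have pow2_neq0 : (2 ^+ n : R) != 0 by rewrite expf_eq0 pnatr_eq0 andbF.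
move=> e f /(congr1 (fun A => \tr (pmat e.2 *m A))).
rewrite /= !mxtrace_pmat_smat eqxx => /complexI.
have [eq_ef2|neq_ef2] := eqVneq e.2 f.2; last first.
  by move/eqP; rewrite mulr0 mulf_eq0 signr_eq0 (negbTE pow2_neq0).
move/(mulIf pow2_neq0)/signr_inj.
by case: e f eq_ef2 => [b t] [b' t'] /= -> ->.
Qed.

Lemma pmat_conj_smat n (s : pstring n) e :
  pmat s *m smat e *m pmat s = (comm_sign s e.2)%:C *: smat e.
Proof. by rewrite /smat -scalemxAr -scalemxAl pmat_conj !scalerA mulrC. Qed.

Lemma comm_sign_mul n (s : pstring n) a b c :
  smat c = smat a *m smat b -> comm_sign s c.2 = comm_sign s a.2 * comm_sign s b.2.
Proof.
move=> c_ab; have conj_c : (comm_sign s c.2)%:C *: smat c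
                          = (comm_sign s a.2 * comm_sign s b.2)%:C *: smat c.
  rewrite -pmat_conj_smat c_ab.
  transitivity ((pmat s *m smat a *m pmat s) *m (pmat s *m smat b *m pmat s)).
    by rewrite !mulmxA -[_ *m pmat s *m pmat s]mulmxA pmat_sqr mulmx1.
  by rewrite !pmat_conj_smat -scalemxAl -scalemxAr scalerA -rmorphM.
apply/eqP; rewrite -subr_eq0 -(inj_eq (@complexI R)) rmorph0.
move/eqP: conj_c; rewrite -subr_eq0 -scalerBl -rmorphB scalemx_eq0.
by rewrite (negbTE (smat_neq0 c)) orbF.
Qed.

Section StabilizerCode.
Variables (n k : nat) (S : {set bool * pstring n}).
Hypothesis stabS : is_stabilizer_group R k S.
Local Notation P := (codespace_proj R S).

Lemma stab_le : (k <= n)%N. Proof. by case: stabS. Qed.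
Lemma stab_card : #|S| = (2 ^ (n - k))%N. Proof. by case: stabS. Qed.
Lemma stab_id : (false, pid n) \in S. Proof. by case: stabS => _ _ []. Qed.
Lemma stab_neg_id : (true, pid n) \notin S. Proof. by case: stabS => _ _ []. Qed.

Lemma stab_mulP a b :
  a \in S -> b \in S -> exists c, c \in S /\ smat c = smat a *m smat b.
Proof. by case: stabS => _ _ _ closedS _; apply: closedS. Qed.

Lemma pow2_stab : (2 ^+ n : R) = (2 ^ (n - k))%:R * 2 ^+ k.
Proof. by rewrite natrX -exprD subnK // stab_le. Qed.

Lemma stab_label_inj e f : e \in S -> f \in S -> e.2 = f.2 -> e = f.
Proof.
case: e f => [b t] [b' t'] /= eS fS eq_t; subst t'.
have [-> //|neq_b] := eqVneq b b'.
have [c [cS c_ef]] := stab_mulP eS fS.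
suff c_neg_id : c = (true, pid n) by move: stab_neg_id; rewrite -c_neg_id cS.
apply: (@smat_inj n); rewrite c_ef /smat /= -scalemxAl -scalemxAr pmat_sqr scalerA pmat_pid.
by case: b b' neq_b {eS fS c_ef} => [] [] //= _; rewrite ?expr0 ?expr1 ?mulr1 ?mul1r.
Qed.

Definition stab_mul e f := odflt e [pick c in S | smat c == smat e *m smat f].

Lemma stab_mulE e f : e \in S -> f \in S ->
  stab_mul e f \in S /\ smat (stab_mul e f) = smat e *m smat f.
Proof.
move=> eS fS; rewrite /stab_mul; case: pickP => [c /andP[cS /eqP ->]|none] //=.
have [c [cS c_ef]] := stab_mulP eS fS.
by have := none c; rewrite cS c_ef eqxx.
Qed.

(* Either comm_sign s is trivial on S, or translating S by an element on which
   it is -1 negates the sum. *)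
Lemma sum_comm_sign_stab_ge0 (s : pstring n) : 0 <= \sum_(e in S) comm_sign s e.2.
Proof.
have [e0 /andP[e0S neq1]|triv] := pickP [pred e | (e \in S) && (comm_sign s e.2 != 1)];
  last first.
  apply: sumr_ge0 => e eS; have := triv e; rewrite /= eS /= => /negbFE /eqP ->.
  exact: ler01.
have mul_inj : {in S &, injective (stab_mul e0)}.
  move=> f f' fS f'S eq_ff'; apply: (@smat_inj n).
  have [_ e0f] := stab_mulE e0S fS; have [_ e0f'] := stab_mulE e0S f'S.
  have : smat e0 *m smat f = smat e0 *m smat f' by rewrite -e0f -e0f' eq_ff'.
  by move/(congr1 (mulmx (smat e0))); rewrite !mulmxA smat_sqr !mul1mx.
have mulS : stab_mul e0 @: S = S.
  apply/eqP; rewrite eqEcard card_in_imset // leqnn andbT.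
  by apply/fintype.subsetP => _ /finset.imsetP[f fS ->]; case: (stab_mulE e0S fS).
have sum_opp : \sum_(e in S) comm_sign s e.2 = - \sum_(e in S) comm_sign s e.2.
  rewrite -{1}mulS big_imset //= -sumrN; apply: eq_bigr => f fS.
  have [_ e0f] := stab_mulE e0S fS.
  by rewrite (comm_sign_mul s e0f) (comm_signN1 neq1) mulN1r.
lra.
Qed.

Definition stab_coef (s : pstring n) : R :=
  \sum_(e in S) (if e.2 == s then (-1) ^+ e.1 else 0).

Definition stabA (l : nat) : R := \sum_(e in S) (pweight e.2 == l)%:R.

Definition stabX (w : nat) : R :=
  \sum_(s : pstring n | pweight s == w) \sum_(e in S) comm_sign s e.2.

Lemma mxtrace_pmat_proj s : \tr (pmat s *m P) = (2 ^+ k * stab_coef s)%:C.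
Proof.
rewrite /codespace_proj -scalemxAr mxtraceZ mulmx_sumr raddf_sum /=.
under eq_bigr => e _ do rewrite mxtrace_pmat_smat.
rewrite -rmorph_sum stab_card -(rmorph_nat (real_complex R)) -fmorphV -rmorphM.
congr (_%:C); rewrite /stab_coef mulr_sumr mulr_sumr; apply: eq_bigr => e _.
rewrite eq_sym; case: eqP => _; rewrite ?mulr0 // pow2_stab; field.
by rewrite pnatr_eq0 expn_eq0.
Qed.

Lemma stab_coef_sqr s : stab_coef s ^+ 2 = \sum_(e in S) (e.2 == s)%:R.
Proof.
have [e0 /andP[e0S /eqP e0s]|none] := pickP [pred e | (e \in S) && (e.2 == s)].
  have others e : e \in S -> e != e0 -> (e.2 == s) = false.
    move=> eS; apply: contraNF => /eqP es; apply/eqP/stab_label_inj => //.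
    by rewrite es e0s.
  rewrite /stab_coef !(bigD1 e0 e0S) /= e0s eqxx !big1 ?addr0 ?sqrr_sign //.
    by move=> e /andP[eS ne0]; rewrite others.
  by move=> e /andP[eS ne0]; rewrite others.
rewrite /stab_coef !big1 ?expr2 ?mul0r // => e eS;
  by have := none e; rewrite /= eS /= => ->.
Qed.

Lemma SL_A_stab l : SL_A k P l = (stabA l)%:C.
Proof.
rewrite /SL_A; under eq_bigr => s _ do rewrite adjmx_pmat !mxtrace_pmat_proj -rmorphM.
rewrite -rmorph_sum -(rmorph_nat (real_complex R)) -fmorphV -rmorphM; congr (_%:C).
under eq_bigr => s _ do rewrite mulrACA -!expr2 stab_coef_sqr.
rewrite -mulr_sumr mulrA natrX mulnC exprM mulVf ?mul1r; last first.
  by rewrite !expf_eq0 pnatr_eq0 !andbF.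
rewrite exchange_big /=; apply: eq_bigr => e _.
rewrite big_mkcond /= (bigD1 e.2) //= eqxx big1 ?addr0 => [|s neq_s].
  by case: ifP.
by rewrite [e.2 == s]eq_sym (negbTE neq_s); case: ifP.
Qed.

Lemma sum_mxtrace_smatM e : e \in S ->
  \sum_(f in S) \tr (smat e *m smat f) = (2 ^+ n : R)%:C.
Proof.
move=> eS; rewrite (bigD1 e eS) /= big1 ?addr0 => [|f /andP[fS neq_fe]].
  by rewrite mxtrace_smatM eqxx mulrA -expr2 sqrr_sign mul1r.
rewrite mxtrace_smatM; case: eqP => [eq_ef|_]; last by rewrite !mulr0.
by case/eqP: neq_fe; apply: stab_label_inj.
Qed.

Lemma mxtrace_pmat_proj_conj s :
  \tr (pmat s *m P *m adjmx (pmat s) *m P)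
  = (2 ^+ n / (2 ^ (n - k))%:R ^+ 2 * \sum_(e in S) comm_sign s e.2)%:C.
Proof.
have conjP : pmat s *m P *m pmat s
              = (#|S|%:R)^-1 *: \sum_(e in S) (comm_sign s e.2)%:C *: smat e.
  rewrite /codespace_proj -scalemxAr -scalemxAl mulmx_sumr mulmx_suml.
  by congr (_ *: _); apply: eq_bigr => e _; rewrite pmat_conj_smat.
rewrite adjmx_pmat conjP /codespace_proj -scalemxAr -scalemxAl !mxtraceZ.
rewrite mulmx_suml raddf_sum /=.
under eq_bigr => e _ do rewrite -scalemxAl mxtraceZ mulmx_sumr raddf_sum /=.
under eq_bigr => e eS do rewrite sum_mxtrace_smatM // -rmorphM.
rewrite -rmorph_sum stab_card -(rmorph_nat (real_complex R)) -fmorphV -!rmorphM.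
by congr (_%:C); rewrite -mulr_suml expr2 invfM; ring.
Qed.

Lemma SL_B_stab w : SL_B k P w = (stabX w / (2 ^ (n - k))%:R)%:C.
Proof.
rewrite /SL_B; under eq_bigr => s _ do rewrite mxtrace_pmat_proj_conj.
rewrite -rmorph_sum -(rmorph_nat (real_complex R)) -fmorphV -rmorphM; congr (_%:C).
rewrite /stabX -mulr_sumr mulrA mulrC; congr (_ * _).
rewrite pow2_stab natrX; field.
by rewrite expf_eq0 !pnatr_eq0 andbF expn_eq0.
Qed.

Lemma stabX_MacWilliams w : stabX w = \sum_(e in S) kraw R n w (pweight e.2).
Proof.
by rewrite /stabX exchange_big /=; apply: eq_bigr => e _; rewrite sum_comm_sign_weight.
Qed.

Lemma stabX_ge0 w : 0 <= stabX w.
Proof. by apply: sumr_ge0 => s _; apply: sum_comm_sign_stab_ge0. Qed.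

Lemma stabA0 : stabA 0 = 1.
Proof.
rewrite /stabA (bigD1 _ stab_id) /= pweight_eq0 eqxx big1 ?addr0 // => e /andP[eS ne].
rewrite pweight_eq0; case: eqP => // e_id.
by case/eqP: ne; apply: stab_label_inj; rewrite ?stab_id.
Qed.

Hypothesis SL_A_odd : forall i : nat, SL_A k P i.*2.+1 = 0.

Lemma stab_weight_even e : e \in S -> ~~ odd (pweight e.2).
Proof.
move=> eS; apply/negP => odd_e; have := SL_A_odd (pweight e.2)./2.
have -> : ((pweight e.2)./2).*2.+1 = pweight e.2 by rewrite -[RHS]odd_double_half odd_e.
rewrite SL_A_stab -(rmorph0 (real_complex R)) => /complexI A_e0.
have : 0 < stabA (pweight e.2).
  rewrite /stabA (bigD1 e eS) /= eqxx ltr_pwDl ?ltr01 //.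
  by apply: sumr_ge0 => f _; apply: ler0n.
by rewrite A_e0 ltxx.
Qed.

Lemma stabX_even (i : nat) :
  stabX i = \sum_(j < (n./2).+1) kraw R n i (2 * j) * stabA (2 * j).
Proof.
rewrite stabX_MacWilliams /stabA; under [X in _ = X]eq_bigr => j _ do rewrite mulr_sumr.
rewrite [RHS]exchange_big; apply: eq_bigr => e eS.
have w_even := stab_weight_even eS; set w := pweight e.2 in w_even *.
have lt_w : (w./2 < (n./2).+1)%N by rewrite ltnS half_leq // pweight_le.
have w_half : (2 * w./2)%N = w.
  by rewrite mul2n -[RHS]odd_double_half (negbTE w_even) add0n.
rewrite (bigD1 (Ordinal lt_w)) //= w_half eqxx mulr1 big1 ?addr0 // => j neq_j.
case: eqP => [w_j|]; last by rewrite mulr0.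
by case/eqP: neq_j; apply: val_inj; rewrite /= w_j mul2n doubleK.
Qed.

End StabilizerCode.

End WeightEnumerators.

Theorem proposition6 (R : realType) (n k : nat) (S : {set bool * pstring n}) :
  @is_stabilizer_group R n k S ->
  (forall i : nat, @SL_A R n k (@codespace_proj R n S) i.*2.+1 = 0) ->
  @SL_B R n k (@codespace_proj R n S) n
    <= ((LPval R n)^-1 * ((3 ^ n)%:R / (2 ^ (n - k))%:R))%:C.
Proof.
move=> stabS SL_A_odd.
rewrite (SL_B_stab stabS) lecR mulrA ler_pM2r ?invr_gt0 ?ltr0n ?expn_gt0 //.
rewrite (stabX_even stabS SL_A_odd); under eq_bigr do rewrite kraw_top_even.
have -> : (3 ^ n)%:R = (3 ^ n)%:R * stabA R S 0 :> R by rewrite (stabA0 stabS) mulr1.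
apply: (LPval_scaled_bound (z := fun j : 'I_(n./2).+1 => stabA R S (2 * j))).
- by move=> j; apply: sumr_ge0 => e _; apply: ler0n.
- by move=> i; rewrite -(stabX_even stabS SL_A_odd i) (stabX_ge0 stabS).
- by rewrite (stabA0 stabS) ltr01.
Qed.
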